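(* Let $\mathcal{H}=(V,H,\bm{w})$ be a finite, connected, weighted undirected hypergraph in which every hyperedge has at least two vertices, and let $C\in\mathbb{R}$. Suppose $\kappa(u,v)\ge C$ for every well-transported pair $\{u,v\}$. Then $\kappa(x,y)\ge C$ for all distinct $x,y\in V$.
   Context: A weighted undirected hypergraph $\mathcal{H}=(V,H,\bm{w})$ has a finite vertex set $V$, a finite set $H$ of hyperedges (subsets of $V$), and positive weights $w_h>0$. Distinct vertices $u,v$ are adjacent ($u\sim v$) if some hyperedge contains both; $\Gamma(x)=\{z: z\sim x\}$; $\mathrm{Deg}(x)=\sum_{h\ni x}w_h$. A hyperpath connecting $u$ and $v$ is a sequence of hyperedges $h_1,\dots,h_l$ with $u\in h_1$, $v\in h_l$, $h_j\cap h_{j+1}\neq\emptyset$; $\mathcal{H}$ is connected if all pairs of distinct vertices are connected by hyperpaths. For $u\ne v$, $d(u,v)=\inf_\gamma\sum_{h\in\gamma}w_h$ over hyperpaths connecting $u,v$; $d(u,u)=0$. $W(\mu,\nu)=\inf_\pi\sum_{x,y}\pi(x,y)d(x,y)$ over couplings $\pi$ of probability measures $\mu,\nu$ on $V$. For $\alpha\in[0,1]$: $\mu_x^\alpha(x)=\alpha$, $\mu_x^\alpha(z)=(1-\alpha)\sum_{h'\ni x,z}\frac{1}{|h'|-1}\frac{w_{h'}}{\mathrm{Deg}(x)}$ for $z\in\Gamma(x)$, $0$ otherwise. For distinct $u,v$: $\kappa_\alpha(u,v)=1-W(\mu_u^\alpha,\mu_v^\alpha)/d(u,v)$, and the Lin–Lu–Yau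 curvature is $\kappa(u,v)=\lim_{\alpha\to1^-}\kappa_\alpha(u,v)/(1-\alpha)$ (this limit exists in $\mathbb{R}$). A pair $\{u,v\}$ of distinct vertices is well-transported if there is a hyperedge $h$ containing both $u$ and $v$ with $d(u,v)=w_h$. *)

From HB Require Import structures.
From mathcomp Require Import all_boot all_order all_algebra.
From mathcomp Require Import all_classical all_reals all_analysis.
Set Implicit Arguments. Unset Strict Implicit. Unset Printing Implicit Defensive.
Import Order.TTheory GRing.Theory Num.Theory.
Import numFieldNormedType.Exports.
Local Open Scope classical_set_scope.
Local Open Scope ring_scope.

(* A weighted hypergraph: vertex set = finType V, hyperedge set H : {set {set V}},
   weights w : {set V} -> R (only values on H matter). *)

Definition adj (V : finType) (H : {set {set V}}) (u v : V) : bool :=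
  (u != v) && [exists h in H, (u \in h) && (v \in h)].

Definition Deg (R : realType) (V : finType) (H : {set {set V}}) (w : {set V} -> R)
  (x : V) : R := \sum_(h in H | x \in h) w h.

Definition hyperpath (V : finType) (H : {set {set V}}) (u v : V) (p : seq {set V}) : Prop :=
  [/\ p != [::], all (fun h => h \in H) p,
      u \in head finset.set0 p, v \in last finset.set0 p &
      forall i, (i.+1 < size p)%N -> nth finset.set0 p i :&: nth finset.set0 p i.+1 != finset.set0].

Definition hconnected (V : finType) (H : {set {set V}}) : Prop :=
  forall u v : V, u != v -> exists p, hyperpath H u v p.

Definition hdist (R : realType) (V : finType) (H : {set {set V}}) (w : {set V} -> R)
  (u v : V) : R :=
  if u == v then 0
  else inf [set r : R | exists p, hyperpath H u v p /\ r = \sum_(h <- p) w h].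

Definition coupling (R : realType) (V : finType) (mu nu : V -> R) (pi : V -> V -> R) : Prop :=
  [/\ forall x y, 0 <= pi x y,
      forall x, \sum_(y : V) pi x y = mu x &
      forall y, \sum_(x : V) pi x y = nu y].

Definition wass (R : realType) (V : finType) (H : {set {set V}}) (w : {set V} -> R)
  (mu nu : V -> R) : R :=
  inf [set r : R | exists pi, coupling mu nu pi /\
         r = \sum_(x : V) \sum_(y : V) pi x y * hdist H w x y].

Definition mu_alpha (R : realType) (V : finType) (H : {set {set V}}) (w : {set V} -> R)
  (alpha : R) (x : V) : V -> R :=
  fun z => if z == x then alpha
           else if adj H x z then
             (1 - alpha) * \sum_(h in H | (x \in h) && (z \in h))
                (((#|h|.-1)%:R)^-1 * (w h / Deg H w x))
           else 0.

Definition kappa_alpha (R : realType) (V : finType) (H : {set {set V}}) (w : {set V} -> R)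
  (alpha : R) (u v : V) : R :=
  1 - wass H w (mu_alpha H w alpha u) (mu_alpha H w alpha v) / hdist H w u v.

Definition kappa (R : realType) (V : finType) (H : {set {set V}}) (w : {set V} -> R)
  (u v : V) : R :=
  let f : R -> R := fun alpha => kappa_alpha H w alpha u v / (1 - alpha) in
  lim (f @ (1 : R)^'-).

Definition well_transported (R : realType) (V : finType) (H : {set {set V}})
  (w : {set V} -> R) (u v : V) : Prop :=
  u != v /\ exists2 h, h \in H & [/\ u \in h, v \in h & hdist H w u v = w h].

(* The transport distance [W_a(u, v)] between the lazy walks [mu_u^a] and [mu_v^a] is
   convex in [a] and equals [d(u, v)] at [a = 1]; hence [kappa_a(u, v) / (1 - a)] is
   nondecreasing and bounded, and its limit [kappa(u, v)] exists.  The triangle inequality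
   for [W_a] then shows that a vertex [z] on a geodesic from [x] to [y] satisfies
   [d(x,z) kappa(x,z) + d(z,y) kappa(z,y) <= d(x,y) kappa(x,y)].  Along a shortest hyperpath
   every hyperedge realises the distance between consecutive junction vertices, which are
   thus well-transported, and induction along the path propagates the bound [C], since the
   positive distances of the pieces add up to [d(x,y)]. *)

From HB Require Import structures.
From mathcomp Require Import all_boot all_order all_algebra.
From mathcomp Require Import all_classical all_reals all_analysis.
From mathcomp Require Import ring lra.
Import Order.TTheory GRing.Theory Num.Theory.
Import numFieldNormedType.Exports.
Set Implicit Arguments. Unset Strict Implicit. Unset Printing Implicit Defensive.
Local Open Scope classical_set_scope.
Local Open Scope ring_scope.

Section Hyperpath.
Variables (V : finType) (H : {set {set V}}).

Definition meets (a b : {set V}) : bool := a :&: b != finset.set0.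

Lemma hyperpath_consP u v h t : hyperpath H u v (h :: t) <->
  [/\ path meets h t, all (mem H) (h :: t), u \in h & v \in last h t].
Proof.
split; first by case=> _ tH uh vt meet; split => //; apply/(pathP finset.set0).
by case=> /(pathP finset.set0) ht tH uh vt; split.
Qed.

Lemma hyperpath_cons u v p : hyperpath H u v p -> exists h t, p = h :: t.
Proof. by case: p => [[]|h t _]; [|exists h, t]. Qed.

Lemma hyperpath_edge u v h : h \in H -> u \in h -> v \in h -> hyperpath H u v [:: h].
Proof. by move=> hH uh vh; apply/hyperpath_consP; rewrite /= hH. Qed.

Lemma hyperpath_cat a b c p q : hyperpath H a b p -> hyperpath H b c q ->
  hyperpath H a c (p ++ q).
Proof.
move=> hp hq; have [h [t pE]] := hyperpath_cons hp; have [h' [t' qE]] := hyperpath_cons hq.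
subst p q; move: hp hq => /hyperpath_consP[ht tH ah bt] /hyperpath_consP[ht' tH' bh' ct'].
apply/hyperpath_consP; split.
- by rewrite cat_path ht /= ht' andbT /meets; apply/set0Pn; exists b; rewrite inE bt bh'.
- by rewrite -cat_cons all_cat tH tH'.
- by [].
- by rewrite last_cat.
Qed.

Lemma hyperpath_behead u v h h' t : hyperpath H u v [:: h, h' & t] ->
  exists2 z, z \in h & hyperpath H z v (h' :: t).
Proof.
move=> /hyperpath_consP[/= /andP[/set0Pn[z] /setIP[zh zh'] ht] /= /andP[_ tH] _ vt].
by exists z => //; apply/hyperpath_consP.
Qed.

Lemma hconnected_cover (x y : V) : hconnected H -> x != y ->
  forall z, exists2 h, h \in H & z \in h.
Proof.
move=> Hc xy z; pose z' := if z == x then y else x.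
have zz' : z != z' by rewrite /z'; have [->|] := eqVneq z x; rewrite ?eqxx.
have [p zp] := Hc z z' zz'; have [h [t pE]] := hyperpath_cons zp; subst p.
by move: zp => /hyperpath_consP[_ /andP[hH _] zh _]; exists h.
Qed.

End Hyperpath.

Section HyperpathWeight.
Variables (R : realType) (V : finType) (H : {set {set V}}) (w : {set V} -> R).
Hypothesis w_gt0 : forall h, h \in H -> 0 < w h.

Definition path_weight (p : seq {set V}) : R := \sum_(h <- p) w h.

Definition path_weights (u v : V) : set R :=
  [set r | exists p, hyperpath H u v p /\ r = path_weight p].

Lemma path_weight_ge0 p : all (mem H) p -> 0 <= path_weight p.
Proof.
rewrite /path_weight big_seq; move=> /allP pH.
by apply: sumr_ge0 => h /pH hH; rewrite ltW ?w_gt0.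
Qed.

Lemma path_weight_gt0 h p : all (mem H) (h :: p) -> 0 < path_weight (h :: p).
Proof.
move=> /= /andP[hH pH]; rewrite /path_weight big_cons.
by rewrite ltr_wpDr ?w_gt0 ?path_weight_ge0.
Qed.

Lemma path_weight_cat p q : path_weight (p ++ q) = path_weight p + path_weight q.
Proof. exact: big_cat. Qed.

Lemma path_weight_uniq p : uniq p ->
  path_weight p = \sum_(h in [set h | h \in p]%SET) w h.
Proof. by move=> up; rewrite /path_weight big_uniq //; apply: eq_bigl => h; rewrite inE. Qed.

Lemma path_weight_le_sub p q : uniq p -> {subset p <= q} -> all (mem H) q ->
  path_weight p <= path_weight q.
Proof.
elim: p q => [|h p IH] q; first by rewrite /path_weight big_nil => _ _ /path_weight_ge0.
move=> /= /andP[hp up] pq qH.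
have hq : h \in q by apply: pq; rewrite mem_head.
rewrite /path_weight (perm_big _ (perm_to_rem hq)) !big_cons lerD2l.
apply: IH => // [g gp|]; last by apply/allP => g /mem_rem; apply: (allP qH).
have gh : g != h by apply: contraNneq hp => <-.
have : g \in q by apply: pq; rewrite inE gp orbT.
by rewrite (perm_mem (perm_to_rem hq)) inE (negbTE gh).
Qed.

Lemma hyperpath_shorten u v p : hyperpath H u v p ->
  exists q, [/\ hyperpath H u v q, uniq q & path_weight q <= path_weight p].
Proof.
move=> up; have [h [t pE]] := hyperpath_cons up; subst p.
move: up => /hyperpath_consP[ht tH uh vt]; move: vt.
case: (shortenP ht) => t' ht' ut' t't vt'.
have sub : {subset h :: t' <= h :: t}.
  by move=> g; rewrite !inE => /orP[->|/t't ->]; rewrite ?orbT.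
exists (h :: t'); split => //; last exact: path_weight_le_sub.
apply/hyperpath_consP; split => //; apply/allP => g /sub; exact: (allP tH).
Qed.

Lemma path_weights_has_lbound u v : has_lbound (path_weights u v).
Proof. by exists 0 => r [p [[_ pH _ _ _] ->]]; apply: path_weight_ge0. Qed.

Lemma hdist_xx u : hdist H w u u = 0.
Proof. by rewrite /hdist eqxx. Qed.

Lemma hdistE u v : u != v -> hdist H w u v = inf (path_weights u v).
Proof. by move=> /negbTE uv; rewrite /hdist uv. Qed.

Lemma hdist_le_path_weight u v p : hyperpath H u v p -> hdist H w u v <= path_weight p.
Proof.
move=> up; have [<-|uv] := eqVneq u v.
  by have [_ pH _ _ _] := up; rewrite hdist_xx path_weight_ge0.
by rewrite hdistE //; apply: (ge_inf (path_weights_has_lbound u v)); exists p.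
Qed.

Lemma hdist_le_weight u v h : h \in H -> u \in h -> v \in h -> hdist H w u v <= w h.
Proof.
move=> hH uh vh; have := hdist_le_path_weight (hyperpath_edge hH uh vh).
by rewrite /path_weight big_seq1.
Qed.

(* Shortest hyperpaths exist since a hyperpath can be shortened to a duplicate-free one,
   whose weight only depends on its (finitely many possible) sets of hyperedges. *)
Lemma exists_geodesic u v : u != v -> (exists p, hyperpath H u v p) ->
  exists p, hyperpath H u v p /\ path_weight p = hdist H w u v.
Proof.
move=> uv [p0 up0]; have [q0 [uq0 q0uniq _]] := hyperpath_shorten up0.
pose P (E : {set {set V}}) : bool :=
  `[< exists q, [/\ hyperpath H u v q, uniq q & E = [set h | h \in q]%SET] >].
have P0 : P [set h | h \in q0]%SET by apply/asboolP; exists q0.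
have [_ /asboolP[q [uq quniq ->]] qmin] :=
  Order.TotalTheory.arg_minP (fun E : {set {set V}} => \sum_(h in E) w h) P0.
exists q; split => //; apply/eqP; rewrite eq_le hdist_le_path_weight // andbT hdistE //.
apply: lb_le_inf; first by exists (path_weight q0), q0.
move=> r [p [up ->]]; have [q1 [uq1 q1uniq le1]] := hyperpath_shorten up.
apply: le_trans le1; rewrite (path_weight_uniq quniq) (path_weight_uniq q1uniq).
by apply: qmin; apply/asboolP; exists q1.
Qed.

Hypothesis H_connected : hconnected H.

Lemma hdist_geodesic u v : u != v ->
  exists p, hyperpath H u v p /\ path_weight p = hdist H w u v.
Proof. by move=> uv; apply: exists_geodesic => //; apply: H_connected. Qed.

Lemma hdist_ge0 u v : 0 <= hdist H w u v.
Proof.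
have [->|uv] := eqVneq u v; first by rewrite hdist_xx.
by have [p [[_ pH _ _ _] <-]] := hdist_geodesic uv; apply: path_weight_ge0.
Qed.

Lemma hdist_gt0 u v : u != v -> 0 < hdist H w u v.
Proof.
move=> uv; have [p [up <-]] := hdist_geodesic uv.
have [h [t pE]] := hyperpath_cons up; subst p.
by move: up => /hyperpath_consP[_ tH _ _]; apply: path_weight_gt0.
Qed.

Lemma hdist_triangle a b c : hdist H w a c <= hdist H w a b + hdist H w b c.
Proof.
have [->|ac] := eqVneq a c; first by rewrite hdist_xx addr_ge0 ?hdist_ge0.
have [<-|ab] := eqVneq a b; first by rewrite hdist_xx add0r.
have [<-|bc] := eqVneq b c; first by rewrite hdist_xx addr0.
have [p [ap <-]] := hdist_geodesic ab; have [q [bq <-]] := hdist_geodesic bc.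
by rewrite -path_weight_cat; apply: hdist_le_path_weight; apply: hyperpath_cat bq.
Qed.

End HyperpathWeight.

Definition point_mass {R : pzSemiRingType} {V : eqType} (u : V) : V -> R :=
  fun x => (x == u)%:R.

Lemma sumr_ge_term (R : numDomainType) (I : finType) (F : I -> R) i :
  (forall j, 0 <= F j) -> F i <= \sum_j F j.
Proof. by move=> F_ge0; rewrite (bigD1 i) //= ler_wpDr ?sumr_ge0. Qed.

Section Transport.
Variables (R : realType) (V : finType) (d : V -> V -> R).
Hypothesis d_ge0 : forall x y, 0 <= d x y.
Hypothesis d_triangle : forall x y z, d x z <= d x y + d y z.
Implicit Types (u v : V) (mu nu rho : V -> R) (pi : V -> V -> R).

Definition is_prob (mu : V -> R) : Prop := (forall x, 0 <= mu x) /\ \sum_x mu x = 1.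

Definition tcost (pi : V -> V -> R) : R := \sum_x \sum_y pi x y * d x y.

Definition coupling_costs (mu nu : V -> R) : set R :=
  [set r | exists pi, coupling mu nu pi /\ r = tcost pi].

Definition transport (mu nu : V -> R) : R := inf (coupling_costs mu nu).

Lemma sum_point_mass u : \sum_x point_mass u x = 1 :> R.
Proof. by rewrite (bigD1 u) //= /point_mass eqxx big1 ?addr0 // => x /negbTE ->. Qed.

Lemma is_prob_point_mass u : is_prob (point_mass u).
Proof. by split; [move=> x; rewrite ler0n | apply: sum_point_mass]. Qed.

Lemma tcost_ge0 mu nu pi : coupling mu nu pi -> 0 <= tcost pi.
Proof. by case=> pi_ge0 _ _; do 2 apply: sumr_ge0 => ? _; rewrite mulr_ge0. Qed.

Lemma coupling_costs_has_lbound mu nu : has_lbound (coupling_costs mu nu).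
Proof. by exists 0 => r [pi [cpl ->]]; apply: tcost_ge0 cpl. Qed.

Lemma coupling_costs_neq0 mu nu : is_prob mu -> is_prob nu -> coupling_costs mu nu !=set0.
Proof.
move=> [mu_ge0 mu1] [nu_ge0 nu1]; pose pi x y := mu x * nu y.
exists (tcost pi), pi; split => //; split => [x y|x|y]; first by rewrite mulr_ge0.
- by rewrite -mulr_sumr nu1 mulr1.
- by rewrite -mulr_suml mu1 mul1r.
Qed.

Lemma transport_le_tcost mu nu pi : coupling mu nu pi -> transport mu nu <= tcost pi.
Proof. by move=> cpl; apply: (ge_inf (coupling_costs_has_lbound mu nu)); exists pi. Qed.

Lemma transport_ge mu nu b : is_prob mu -> is_prob nu ->
  (forall pi, coupling mu nu pi -> b <= tcost pi) -> b <= transport mu nu.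
Proof.
move=> pmu pnu b_le; apply: lb_le_inf; first exact: coupling_costs_neq0.
by move=> r [pi [cpl ->]]; apply: b_le.
Qed.

Lemma transport_approx mu nu e : is_prob mu -> is_prob nu -> 0 < e ->
  exists pi, coupling mu nu pi /\ tcost pi < transport mu nu + e.
Proof.
move=> pmu pnu e_gt0.
have [r [pi [cpl ->]] lt] := inf_adherent e_gt0
  (conj (coupling_costs_neq0 pmu pnu) (coupling_costs_has_lbound mu nu)).
by exists pi.
Qed.

(* The inverse is [0] where the marginal vanishes, but then the whole row or column
   of the coupling vanishes too. *)
Lemma coupling_mulVr mu nu pi x y : coupling mu nu pi -> pi x y / nu y * nu y = pi x y.
Proof.
case=> pi_ge0 _ pi_nu; have [nu0|nu_neq0] := eqVneq (nu y) 0; last by rewrite mulfVK.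
have := @psumr_eq0P _ _ predT (pi^~ y) (fun x _ => pi_ge0 x y).
by move=> /(_ _ x isT) ->; rewrite ?mul0r // pi_nu nu0.
Qed.

Lemma coupling_mulrV mu nu pi x y : coupling mu nu pi -> mu x / mu x * pi x y = pi x y.
Proof.
case=> pi_ge0 pi_mu _; have [mu0|mu_neq0] := eqVneq (mu x) 0; last by rewrite mulfV ?mul1r.
have := @psumr_eq0P _ _ predT (pi x) (fun y _ => pi_ge0 x y).
by move=> /(_ _ y isT) ->; rewrite ?mulr0 // pi_mu mu0.
Qed.

Definition glue (nu : V -> R) (pi1 pi2 : V -> V -> R) x z : R :=
  \sum_y pi1 x y / nu y * pi2 y z.

Lemma coupling_glue mu nu rho pi1 pi2 : coupling mu nu pi1 -> coupling nu rho pi2 ->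
  coupling mu rho (glue nu pi1 pi2).
Proof.
move=> c1 c2; have [pi1_ge0 pi1_mu pi1_nu] := c1; have [pi2_ge0 pi2_nu pi2_rho] := c2.
split => [x z|x|z].
- by apply: sumr_ge0 => y _; rewrite !mulr_ge0 // invr_ge0 -(pi1_nu y) sumr_ge0.
- rewrite /glue exchange_big /= -pi1_mu; apply: eq_bigr => y _.
  by rewrite -mulr_sumr pi2_nu (coupling_mulVr _ _ c1).
- rewrite /glue exchange_big /= -pi2_rho; apply: eq_bigr => y _.
  by rewrite -!mulr_suml pi1_nu (coupling_mulrV _ _ c2).
Qed.

Lemma tcost_glue mu nu rho pi1 pi2 : coupling mu nu pi1 -> coupling nu rho pi2 ->
  tcost (glue nu pi1 pi2) <= tcost pi1 + tcost pi2.
Proof.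
move=> c1 c2; have [pi1_ge0 _ pi1_nu] := c1; have [pi2_ge0 pi2_nu _] := c2.
pose g x y z := pi1 x y / nu y * pi2 y z.
have g_ge0 x y z : 0 <= g x y z.
  by rewrite !mulr_ge0 // invr_ge0 -(pi1_nu y) sumr_ge0.
have first_leg : \sum_x \sum_z \sum_y g x y z * d x y = tcost pi1.
  apply: eq_bigr => x _; rewrite exchange_big /=; apply: eq_bigr => y _.
  by rewrite -mulr_suml /g -mulr_sumr pi2_nu (coupling_mulVr _ _ c1).
have second_leg : \sum_x \sum_z \sum_y g x y z * d y z = tcost pi2.
  rewrite exchange_big /=; under eq_bigr => z _ do rewrite exchange_big /=.
  rewrite exchange_big /=; apply: eq_bigr => y _; apply: eq_bigr => z _.
  by rewrite -mulr_suml /g -!mulr_suml pi1_nu (coupling_mulrV _ _ c2).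
rewrite -first_leg -second_leg -big_split; apply: ler_sum => x _.
rewrite -big_split; apply: ler_sum => z _; rewrite /glue mulr_suml -big_split.
apply: ler_sum => y _; rewrite /= -mulrDr.
by apply: ler_wpM2l; [apply: g_ge0 | apply: d_triangle].
Qed.

Lemma transport_triangle mu nu rho : is_prob mu -> is_prob nu -> is_prob rho ->
  transport mu rho <= transport mu nu + transport nu rho.
Proof.
move=> pmu pnu prho; apply/ler_addgt0Pr => e e_gt0.
have e2_gt0 : 0 < e / 2 by rewrite divr_gt0.
have [pi1 [c1 le1]] := transport_approx pmu pnu e2_gt0.
have [pi2 [c2 le2]] := transport_approx pnu prho e2_gt0.
have := transport_le_tcost (coupling_glue c1 c2); have := tcost_glue c1 c2.
lra.
Qed.

Lemma transport_convex mu nu mu1 nu1 mu2 nu2 t : 0 <= t -> t <= 1 ->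
  is_prob mu1 -> is_prob nu1 -> is_prob mu2 -> is_prob nu2 ->
  (forall x, mu x = t * mu1 x + (1 - t) * mu2 x) ->
  (forall x, nu x = t * nu1 x + (1 - t) * nu2 x) ->
  transport mu nu <= t * transport mu1 nu1 + (1 - t) * transport mu2 nu2.
Proof.
move=> t_ge0 t_le1 pmu1 pnu1 pmu2 pnu2 muE nuE; apply/ler_addgt0Pr => e e_gt0.
have [pi1 [c1 le1]] := transport_approx pmu1 pnu1 e_gt0.
have [pi2 [c2 le2]] := transport_approx pmu2 pnu2 e_gt0.
have [[pi1_ge0 pi1_mu pi1_nu] [pi2_ge0 pi2_mu pi2_nu]] := (c1, c2).
have s_ge0 : 0 <= 1 - t by rewrite subr_ge0.
pose pi x y := t * pi1 x y + (1 - t) * pi2 x y.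
have cpl : coupling mu nu pi.
  split => [x y|x|y]; first by rewrite addr_ge0 // mulr_ge0.
  - by rewrite muE big_split /= -!mulr_sumr pi1_mu pi2_mu.
  - by rewrite nuE big_split /= -!mulr_sumr pi1_nu pi2_nu.
have piE : tcost pi = t * tcost pi1 + (1 - t) * tcost pi2.
  rewrite /tcost !mulr_sumr -big_split; apply: eq_bigr => x _.
  rewrite !mulr_sumr -big_split; apply: eq_bigr => y _.
  by rewrite /pi mulrDl !mulrA.
have := transport_le_tcost cpl; rewrite piE.
have := ler_wpM2l t_ge0 (ltW le1); have := ler_wpM2l s_ge0 (ltW le2).
nra.
Qed.

Lemma coupling_point_mass u v pi : coupling (point_mass u) (point_mass v) pi ->
  tcost pi = d u v.
Proof.
move=> [pi_ge0 pi_mu pi_nu].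
have pi0_row x y : x != u -> pi x y = 0.
  move=> xu; apply/eqP; rewrite eq_le pi_ge0 andbT.
  by apply: le_trans (sumr_ge_term y (pi_ge0 x)) _; rewrite pi_mu /point_mass (negbTE xu).
have pi0_col x y : y != v -> pi x y = 0.
  move=> yv; apply/eqP; rewrite eq_le pi_ge0 andbT.
  by apply: le_trans (sumr_ge_term x (pi_ge0^~ y)) _; rewrite pi_nu /point_mass (negbTE yv).
have pi_uv : pi u v = 1.
  by have := pi_mu u; rewrite /point_mass eqxx (bigD1 v) //= big1 ?addr0 // => y /pi0_col.
rewrite /tcost (bigD1 u) //= [X in _ + X]big1 ?addr0 => [|x xu]; last first.
  by apply: big1 => y _; rewrite pi0_row ?mul0r.
rewrite (bigD1 v) //= [X in _ + X]big1 ?addr0 ?pi_uv ?mul1r // => y yv.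
by rewrite pi0_col ?mul0r.
Qed.

Lemma transport_point_mass u v : transport (point_mass u) (point_mass v) = d u v.
Proof.
apply/eqP; rewrite eq_le; apply/andP; split.
  have [_ [pi [cpl _]]] := coupling_costs_neq0 (is_prob_point_mass u) (is_prob_point_mass v).
  by rewrite -(coupling_point_mass cpl) transport_le_tcost.
apply: transport_ge; try exact: is_prob_point_mass.
by move=> pi cpl; rewrite (coupling_point_mass cpl).
Qed.

(* Kantorovich duality, easy direction, for the 1-Lipschitz potential [d u]. *)
Lemma tcost_ge_potential mu nu pi u : coupling mu nu pi ->
  \sum_y nu y * d u y - \sum_x mu x * d u x <= tcost pi.
Proof.
move=> [pi_ge0 pi_mu pi_nu].
have -> : \sum_y nu y * d u y - \sum_x mu x * d u x =
    \sum_x \sum_y pi x y * (d u y - d u x).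
  under [RHS]eq_bigr => x _ do rewrite (eq_bigr _ (fun y _ => mulrBr _ _ _)) sumrB.
  rewrite sumrB exchange_big /=; congr (_ - _).
    by apply: eq_bigr => y _; rewrite -pi_nu mulr_suml.
  by apply: eq_bigr => x _; rewrite -pi_mu mulr_suml.
apply: ler_sum => x _; apply: ler_sum => y _; apply: ler_wpM2l => //.
by rewrite lerBlDl d_triangle.
Qed.

End Transport.

Section Curvature.
Variables (R : realType) (V : finType) (H : {set {set V}}) (w : {set V} -> R).
Hypothesis w_gt0 : forall h, h \in H -> 0 < w h.
Hypothesis card_ge2 : forall h, h \in H -> (2 <= #|h|)%N.
Hypothesis H_cover : forall x : V, exists2 h, h \in H & x \in h.

Lemma mu_alphaE a x z :
  mu_alpha H w a x z = a * point_mass x z + (1 - a) * mu_alpha H w 0 x z.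
Proof.
rewrite /mu_alpha /point_mass subr0 mul1r.
by case: eqP => _; [rewrite mulr1 mulr0 addr0 | case: ifP; rewrite mulr0 add0r ?mulr0].
Qed.

Lemma mu_alpha1 x : mu_alpha H w 1 x = point_mass x.
Proof. by apply/funext => z; rewrite mu_alphaE subrr mul0r addr0 mul1r. Qed.

Lemma Deg_gt0 x : 0 < Deg H w x.
Proof.
have [h hH xh] := H_cover x; rewrite /Deg (bigD1 h) ?hH ?xh //=.
by rewrite ltr_wpDr ?w_gt0 // sumr_ge0 // => g /andP[/andP[gH _] _]; rewrite ltW ?w_gt0.
Qed.

Lemma mu_alpha0_ge0 x z : 0 <= mu_alpha H w 0 x z.
Proof.
rewrite /mu_alpha; case: eqP => // _; case: ifP => // _.
rewrite mulr_ge0 ?subr_ge0 // sumr_ge0 // => h /andP[hH _].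
by rewrite mulr_ge0 ?invr_ge0 ?ler0n // divr_ge0 ?ltW ?w_gt0 ?Deg_gt0.
Qed.

(* Each hyperedge [h] through [x] sends its share [w h / Deg x] of the mass, spread
   evenly, to the [#|h| - 1] other vertices of [h]. *)
Lemma sum_mu_alpha0 x : \sum_z mu_alpha H w 0 x z = 1.
Proof.
pose c (h : {set V}) := ((#|h|.-1)%:R)^-1 * (w h / Deg H w x).
have -> : \sum_z mu_alpha H w 0 x z =
    \sum_(z | z != x) \sum_(h in H | (x \in h) && (z \in h)) c h.
  rewrite (bigD1 x) //= /mu_alpha eqxx add0r; apply: eq_bigr => z zx.
  rewrite (negbTE zx) subr0 mul1r; case: ifP => // not_adj.
  apply/esym/big1 => h /andP[hH xzh]; move: not_adj.
  by rewrite /adj eq_sym zx /= => /negbT/existsPn/(_ h); rewrite hH xzh.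
rewrite (exchange_big_dep (fun h => (h \in H) && (x \in h))) /=; last first.
  by move=> z h _ /andP[-> /andP[-> _]].
rewrite (eq_bigr (fun h => w h / Deg H w x)) => [|h /andP[hH xh]]; last first.
  rewrite (eq_bigl (mem (h :\ x))) => [|z]; last by rewrite !inE hH xh.
  have cardD1 : #|h :\ x| = #|h|.-1 by rewrite (cardsD1 x h) xh.
  have card_gt0 : (0 < #|h|.-1)%N by have := card_ge2 hH; case: #|h| => [|[|n]].
  by rewrite sumr_const cardD1 -mulrnAl -mulr_natr mulVf ?mul1r // pnatr_eq0 -lt0n.
by rewrite -mulr_suml mulfV // lt0r_neq0 ?Deg_gt0.
Qed.

Lemma is_prob_mu_alpha a x : 0 <= a -> a <= 1 -> is_prob (mu_alpha H w a x).
Proof.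
move=> a_ge0 a_le1; split => [z|].
  by rewrite mu_alphaE addr_ge0 ?mulr_ge0 ?ler0n ?mu_alpha0_ge0 ?subr_ge0.
under eq_bigr do rewrite mu_alphaE.
by rewrite big_split /= -!mulr_sumr sum_mu_alpha0 sum_point_mass !mulr1 addrC subrK.
Qed.

Hypothesis H_connected : hconnected H.

Let d := hdist H w.
Let d_ge0 : forall u v, 0 <= d u v := hdist_ge0 w_gt0 H_connected.
Let d_triangle : forall u v z, d u z <= d u v + d v z := hdist_triangle w_gt0 H_connected.

Lemma wassE : wass H w = transport d.
Proof. by []. Qed.

Definition lazy_wass (u v : V) (a : R) : R :=
  wass H w (mu_alpha H w a u) (mu_alpha H w a v).

Definition kappa_quot (u v : V) (a : R) : R := kappa_alpha H w a u v / (1 - a).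

Definition jump_length (u : V) : R := \sum_z mu_alpha H w 0 u z * d u z.

Lemma kappaE u v : kappa H w u v = lim (kappa_quot u v @ (1 : R)^'-).
Proof. by []. Qed.

Lemma hdist_mul_kappa_quot u v a : u != v -> a < 1 ->
  d u v * kappa_quot u v a = (d u v - lazy_wass u v a) / (1 - a).
Proof.
move=> uv a_lt1; have := hdist_gt0 w_gt0 H_connected uv.
rewrite /kappa_quot /kappa_alpha -/(lazy_wass u v a) -/d => d_gt0.
by field; rewrite !lt0r_neq0 // subr_gt0.
Qed.

Lemma lazy_wass1 u v : lazy_wass u v 1 = d u v.
Proof. by rewrite /lazy_wass !mu_alpha1 wassE transport_point_mass. Qed.

Lemma lazy_wass_convex u v a b t : 0 <= a <= 1 -> 0 <= b <= 1 -> 0 <= t <= 1 ->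
  lazy_wass u v (t * a + (1 - t) * b) <= t * lazy_wass u v a + (1 - t) * lazy_wass u v b.
Proof.
move=> /andP[a_ge0 a_le1] /andP[b_ge0 b_le1] /andP[t_ge0 t_le1].
rewrite /lazy_wass wassE; apply: transport_convex => //;
  do ?[exact: is_prob_mu_alpha];
  by move=> x; rewrite (mu_alphaE (_ + _)) (mu_alphaE a) (mu_alphaE b); ring.
Qed.

Lemma lazy_wass_ge u v a : 0 <= a <= 1 ->
  a * d u v - (1 - a) * jump_length u <= lazy_wass u v a.
Proof.
move=> /andP[a_ge0 a_le1]; rewrite /lazy_wass wassE.
apply: transport_ge => [||pi cpl]; do ?exact: is_prob_mu_alpha.
apply: le_trans (tcost_ge_potential d_triangle u cpl).
have -> : \sum_x mu_alpha H w a u x * d u x = (1 - a) * jump_length u.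
  rewrite /jump_length mulr_sumr; apply: eq_bigr => x _.
  rewrite mu_alphaE mulrDl [X in X + _](_ : _ = 0) ?add0r ?mulrA //.
  by rewrite /point_mass; case: eqVneq => [->|_]; rewrite /d ?hdist_xx ?mulr0 ?mul0r.
apply: lerB => //; rewrite [in leLHS](_ : a = mu_alpha H w a v v); last by rewrite /mu_alpha eqxx.
apply: (sumr_ge_term (F := fun y => mu_alpha H w a v y * d u y)) => y.
by rewrite mulr_ge0 ?d_ge0 //; apply: (is_prob_mu_alpha v a_ge0 a_le1).1.
Qed.

Lemma kappa_quot_le u v a b : u != v -> 0 <= a -> a <= b -> b < 1 ->
  kappa_quot u v a <= kappa_quot u v b.
Proof.
move=> uv a_ge0 ab b_lt1; have d_gt0 := hdist_gt0 w_gt0 H_connected uv.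
have a_lt1 := le_lt_trans ab b_lt1.
rewrite -(ler_pM2l d_gt0) !hdist_mul_kappa_quot //.
set t := (1 - b) / (1 - a).
have a'_gt0 : 0 < 1 - a by rewrite subr_gt0.
have t_gt0 : 0 < t by rewrite divr_gt0 // subr_gt0.
have t_le1 : t <= 1 by rewrite ler_pdivrMr // mul1r lerB.
have bE : b = t * a + (1 - t) * 1 by rewrite /t; field; rewrite lt0r_neq0.
have a01 : 0 <= a <= 1 by rewrite a_ge0 (ltW a_lt1).
have one01 : 0 <= (1 : R) <= 1 by rewrite ler01 lexx.
have t01 : 0 <= t <= 1 by rewrite (ltW t_gt0).
have := lazy_wass_convex u v a01 one01 t01; rewrite -bE lazy_wass1 => Wb.
have -> : (d u v - lazy_wass u v a) / (1 - a) = t * (d u v - lazy_wass u v a) / (1 - b).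
  by rewrite /t; field; rewrite !lt0r_neq0 // subr_gt0.
by apply: ler_wpM2r; [rewrite invr_ge0 subr_ge0 ltW | lra].
Qed.

Lemma kappa_quot_ub u v a : u != v -> 0 <= a < 1 ->
  kappa_quot u v a <= (d u v + jump_length u) / d u v.
Proof.
move=> uv /andP[a_ge0 a_lt1]; have d_gt0 := hdist_gt0 w_gt0 H_connected uv.
rewrite ler_pdivlMr // mulrC hdist_mul_kappa_quot // ler_pdivrMr ?subr_gt0 //.
have := lazy_wass_ge u v (a := a); rewrite a_ge0 (ltW a_lt1) /=; nra.
Qed.

(* Without this, the [lim] in [kappa] would be a junk value. *)
Lemma kappa_quot_cvg u v : u != v -> cvg (kappa_quot u v @ (1 : R)^'-).
Proof.
move=> uv; apply: nondecreasing_at_left_is_cvgr.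
- near=> x => a b; rewrite !in_itv /= => /andP[xa a_lt1] /andP[_ b_lt1] ab.
  apply: kappa_quot_le => //; apply: ltW; apply: lt_trans xa.
  by near: x; apply: nbhs_left_gt.
- near=> x; exists ((d u v + jump_length u) / d u v) => _ [a] + <-.
  rewrite /= in_itv /= => /andP[xa a_lt1].
  apply: kappa_quot_ub; rewrite // a_lt1 andbT ltW //; apply: lt_trans xa.
  by near: x; apply: nbhs_left_gt.
Unshelve. all: by end_near.
Qed.

Lemma kappa_split x z y : x != z -> z != y -> x != y -> d x y = d x z + d z y ->
  d x z * kappa H w x z + d z y * kappa H w z y <= d x y * kappa H w x y.
Proof.
move=> xz zy xy dE; rewrite !kappaE -subr_ge0.
apply: (@cvgr_to_ge R ((1 : R)^'-) _ R (fun a => d x y * kappa_quot x y a -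
    (d x z * kappa_quot x z a + d z y * kappa_quot z y a))).
  by apply: cvgB; [|apply: cvgD]; apply: cvgMl_tmp; apply: kappa_quot_cvg.
near=> a.
have a_gt0 : 0 < a by near: a; apply: nbhs_left_gt.
have a_lt1 : a < 1 by near: a; apply: nbhs_left_lt.
have pa p := is_prob_mu_alpha p (ltW a_gt0) (ltW a_lt1).
have := transport_triangle d_ge0 d_triangle (pa x) (pa z) (pa y).
rewrite -!wassE -!/(lazy_wass _ _ a) => W_triangle.
rewrite !hdist_mul_kappa_quot // subr_ge0 -mulrDl.
by apply: ler_wpM2r; [rewrite invr_ge0 subr_ge0 ltW | rewrite dE; lra].
Unshelve. all: by end_near.
Qed.

Lemma geodesic_split u v z h t : hyperpath H u v (h :: t) ->
  path_weight w (h :: t) = d u v -> z \in h -> hyperpath H z v t ->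
  d u z = w h /\ d z v = path_weight w t.
Proof.
move=> /hyperpath_consP[_ /= /andP[hH _] uh _] uvE zh zv.
have {}uvE : d u v = w h + path_weight w t by rewrite -uvE /path_weight big_cons.
have := hdist_le_weight w_gt0 hH uh zh; have := hdist_le_path_weight w_gt0 zv.
rewrite -/d; have := d_triangle u z v; split; lra.
Qed.

Lemma kappa_ge_geodesic C :
  (forall u v, well_transported H w u v -> C <= kappa H w u v) ->
  forall t h u v, u != v -> hyperpath H u v (h :: t) -> path_weight w (h :: t) = d u v ->
  C <= kappa H w u v.
Proof.
move=> kappa_wt; elim=> [|h' t IH] h u v uv uvp uvE.
  move: uvp => /hyperpath_consP[_ /= /andP[hH _] uh vh].
  apply: kappa_wt; split => //; exists h => //; split => //.
  by rewrite -/d -uvE /path_weight big_seq1.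
have [z zh zvp] := hyperpath_behead uvp.
have [uzE zvE] := geodesic_split uvp uvE zh zvp.
move: uvp => /hyperpath_consP[_ /= /andP[hH h'tH] uh _].
have uz_gt0 : 0 < d u z by rewrite uzE w_gt0.
have zv_gt0 : 0 < d z v by rewrite zvE (path_weight_gt0 w_gt0 h'tH).
have uz : u != z by apply: contraTneq uz_gt0 => ->; rewrite /d hdist_xx ltxx.
have zv : z != v by apply: contraTneq zv_gt0 => ->; rewrite /d hdist_xx ltxx.
have kappa_uz : C <= kappa H w u z by apply: kappa_wt; split => //; exists h.
have kappa_zv : C <= kappa H w z v by apply: IH zvp _.
have uvE' : d u v = d u z + d z v by rewrite uzE zvE -uvE /path_weight big_cons.
have := kappa_split uz zv uv uvE'; rewrite uvE'; nra.
Qed.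

End Curvature.

Theorem mainTheorem3 (R : realType) (V : finType) (H : {set {set V}})
  (w : {set V} -> R) (C : R) :
  (forall h, h \in H -> 0 < w h) ->
  (forall h, h \in H -> (2 <= #|h|)%N) ->
  hconnected H ->
  (forall u v : V, well_transported H w u v -> C <= kappa H w u v) ->
  forall x y : V, x != y -> C <= kappa H w x y.
Proof.
move=> w_gt0 card_ge2 H_connected kappa_wt x y xy.
have H_cover := hconnected_cover H_connected xy.
have [p [xyp xyE]] := hdist_geodesic w_gt0 H_connected xy.
have [h [t pE]] := hyperpath_cons xyp; subst p.
exact: (kappa_ge_geodesic w_gt0 card_ge2 H_cover H_connected kappa_wt xy xyp xyE).
Qed.
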